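(* Suppose that for every atom $z$ of $L(\mathbb{R}^3)$ there exists a finite set $\Omega(z)$ of atoms of $L(\mathbb{R}^3)$ with $e_1,e_2,e_3,b_{12},b_{13},b_{23},z\in\Omega(z)$ such that every frame function $f$ on $\Omega(z)$ satisfying $f(e_i)=0$ ($1\le i\le 3$), $f(b_{ij})=0$ ($1\le i<j\le 3$) and $|f(x)|\le 1$ for all $x\in\Omega(z)$ also satisfies $|f(z)|\le \tfrac12$. Then every bounded frame function $f$ on the set of all atoms of $L(\mathbb{R}^3)$ satisfying $f(e_i)=0$ for all $i$ and $f(b_{ij})=0$ for all $i<j$ is identically zero.
   Context: $L(\mathbb{R}^3)$ denotes the lattice of subspaces of $\mathbb{R}^3$ (with its standard inner product); its atoms are the one-dimensional subspaces (rays). A frame function on a set $\Gamma$ of atoms of $L(\mathbb{R}^3)$ is a real function $f$ on $\Gamma$ for which there is a constant $C$ such that $f(x)+f(x')+f(x'')=C$ for every triple $x,x',x''$ of pairwise orthogonal atoms in $\Gamma$. Let $\vec{e_1}=(1,0,0)$, $\vec{e_2}=(0,1,0)$, $\vec{e_3}=(0,0,1)$ and $\vec{b_{ij}}=\frac{1}{\sqrt{2}}(\vec{e_i}+\vec{e_j})$ for $1\le i<j\le 3$. Let $e_i$ and $b_{ij}$ denote the rays spanned by these vectors. *)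

From mathcomp Require Import all_boot all_order all_algebra.
From Stdlib Require Rdefinitions.
From mathcomp Require Import Rstruct.
Notation R := Rdefinitions.R.
Set Implicit Arguments. Unset Strict Implicit. Unset Printing Implicit Defensive.
Import Order.TTheory GRing.Theory Num.Theory.
Local Open Scope ring_scope.

Definition vec3 := 'rV[R]_3.
Definition dot (u v : vec3) : R := (u *m v^T) 0 0.

(* Subsets of R^3 are predicates; an atom of L(R^3) is a one-dimensional
   subspace, i.e. a set of the form R v with v <> 0. *)
Definition subset3 := vec3 -> Prop.
Definition ray (v : vec3) : subset3 := fun w => exists t : R, w = t *: v.
Definition is_atom (x : subset3) : Prop := exists v : vec3, v != 0 /\ x = ray v.

Definition orth (x y : subset3) : Prop :=
  forall u w, x u -> y w -> dot u w = 0.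

Definition frame_function (Gamma : subset3 -> Prop) (f : subset3 -> R) : Prop :=
  exists C : R, forall x x' x'' : subset3,
    Gamma x -> Gamma x' -> Gamma x'' ->
    orth x x' -> orth x x'' -> orth x' x'' ->
    f x + f x' + f x'' = C.

Definition finite_atoms (Omega : subset3 -> Prop) : Prop :=
  exists s : seq subset3, forall x, Omega x <-> List.In x s.

Definition evec (i : 'I_3) : vec3 := delta_mx 0 i.
Definition bvec (i j : 'I_3) : vec3 := (Num.sqrt 2)^-1 *: (evec i + evec j).

Definition e_ (i : 'I_3) : subset3 := ray (evec i).
Definition b_ (i j : 'I_3) : subset3 := ray (bvec i j).

Definition vanishes_on_eb (f : subset3 -> R) : Prop :=
  (forall i : 'I_3, f (e_ i) = 0) /\
  (forall i j : 'I_3, (i < j)%N -> f (b_ i j) = 0).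

From mathcomp Require Import all_boot all_order all_algebra.
From mathcomp Require Import Rstruct.
Import Order.TTheory GRing.Theory Num.Theory.
Set Implicit Arguments.
Unset Strict Implicit.
Unset Printing Implicit Defensive.
Local Open Scope ring_scope.

(* If M bounds |f| on all atoms, then f / M is a frame function on every
   Omega(z) satisfying the hypotheses, so |f z| <= M / 2 for every atom z.
   Iterating gives |f z| <= M / 2^n for all n, hence f z = 0.
   Only the halving property of Omega(z) is used, not its finiteness. *)

Lemma frame_functionZ (Gamma : subset3 -> Prop) (f : subset3 -> R) (c : R) :
  frame_function Gamma f -> frame_function Gamma (fun x => c * f x).
Proof.
move=> [C HC]; exists (c * C) => x x' x'' Gx Gx' Gx'' o1 o2 o3.
by rewrite -!mulrDr HC.
Qed.

Lemma frame_function_sub (Gamma Gamma' : subset3 -> Prop) (f : subset3 -> R) :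
  (forall x, Gamma' x -> Gamma x) ->
  frame_function Gamma f -> frame_function Gamma' f.
Proof.
move=> sub [C HC]; exists C => x x' x'' Gx Gx' Gx''.
exact: HC (sub _ Gx) (sub _ Gx') (sub _ Gx'').
Qed.

Lemma vanishes_on_ebZ (f : subset3 -> R) (c : R) :
  vanishes_on_eb f -> vanishes_on_eb (fun x => c * f x).
Proof. by move=> [He Hb]; split=> [i|i j ij]; rewrite ?He ?Hb // mulr0. Qed.

Definition finite_halving_sets : Prop :=
  forall z : subset3, is_atom z ->
    exists Omega : subset3 -> Prop,
      (forall x, Omega x -> is_atom x) /\ finite_atoms Omega /\
      (forall i : 'I_3, Omega (e_ i)) /\
      (forall i j : 'I_3, (i < j)%N -> Omega (b_ i j)) /\
      Omega z /\
      (forall f : subset3 -> R,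
         frame_function Omega f -> vanishes_on_eb f ->
         (forall x, Omega x -> `|f x| <= 1) ->
         `|f z| <= 2^-1).

Section Halving.

Variable f : subset3 -> R.
Hypothesis halving_sets : finite_halving_sets.
Hypothesis f_frame : frame_function is_atom f.
Hypothesis f_eb : vanishes_on_eb f.

Lemma frame_bound_half (K : R) : 0 < K ->
  (forall x, is_atom x -> `|f x| <= K) ->
  forall z, is_atom z -> `|f z| <= K / 2.
Proof.
move=> K0 fK z za.
have [Om [Om_atom [_ [_ [_ [_ Om_half]]]]]] := halving_sets za.
have : `|K^-1 * f z| <= 2^-1.
  apply: (Om_half (fun x => K^-1 * f x)).
  - exact: frame_functionZ (frame_function_sub Om_atom f_frame).
  - exact: vanishes_on_ebZ.
  - move=> x Omx; rewrite normrM normfV (gtr0_norm K0) ler_pdivrMl // mulr1.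
    exact/fK/Om_atom.
by rewrite normrM normfV (gtr0_norm K0) ler_pdivrMl // mulrC.
Qed.

Lemma frame_bound_halves (M : R) : 0 < M ->
  (forall x, is_atom x -> `|f x| <= M) ->
  forall n z, is_atom z -> `|f z| * 2 ^+ n <= M.
Proof.
move=> M0 fM n; elim: n => [|n IH] z za; first by rewrite mulr1 fM.
have pow_gt0 : 0 < 2 ^+ n :> R by rewrite exprn_gt0.
have fMn : forall x, is_atom x -> `|f x| <= M / 2 ^+ n.
  by move=> x xa; rewrite ler_pdivlMr // IH.
have := frame_bound_half (divr_gt0 M0 pow_gt0) fMn za.
by rewrite -mulrA -invfM ler_pdivlMr ?mulr_gt0 // exprSr mulrA.
Qed.

End Halving.

Lemma le0_of_geometric_bound (F : archiRealFieldType) (a M : F) :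
  (forall n : nat, a * 2 ^+ n <= M) -> a <= 0.
Proof.
move=> aM; rewrite leNgt; apply/negP => a0.
have M_ge0 : 0 <= M by apply: le_trans (aM 0%N); rewrite mulr1 ltW.
have := archi_boundP (divr_ge0 M_ge0 (ltW a0)).
set n := Num.Def.archi_bound _ => Ma_lt_n.
have : M / a < 2 ^+ n by rewrite (lt_trans Ma_lt_n) // -natrX ltr_nat ltn_expl.
by rewrite ltr_pdivrMr // mulrC ltNge aM.
Qed.

Theorem mainTheorem2 :
  (forall z : subset3, is_atom z ->
     exists Omega : subset3 -> Prop,
       (forall x, Omega x -> is_atom x) /\ finite_atoms Omega /\
       (forall i : 'I_3, Omega (e_ i)) /\
       (forall i j : 'I_3, (i < j)%N -> Omega (b_ i j)) /\
       Omega z /\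
       (forall f : subset3 -> R,
          frame_function Omega f -> vanishes_on_eb f ->
          (forall x, Omega x -> `|f x| <= 1) ->
          `|f z| <= 2^-1)) ->
  forall f : subset3 -> R,
    frame_function is_atom f ->
    (exists M : R, forall x, is_atom x -> `|f x| <= M) ->
    vanishes_on_eb f ->
    forall x, is_atom x -> f x = 0.
Proof.
move=> halving f f_frame [M fM] f_eb x xa.
apply/eqP; rewrite -normr_le0.
have [M_le0|M_gt0] := leP M 0; first exact: le_trans (fM x xa) M_le0.
apply: (@le0_of_geometric_bound _ _ M) => n.
exact: frame_bound_halves.
Qed.
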